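(* Let $x,y,z$ be local coordinates on a 3-manifold and let $E,K,P$ be functions of $x$ only, $F,L,Q$ functions of $y$ only, $G,M,R$ functions of $z$ only, with $\Delta:=ELR+FMP+GKQ-EMQ-FKR-GLP\neq 0$ and $LR-MQ$, $MP-KR$, $KQ-LP$ nonzero. Consider the Stäckel metric $$g=\frac{\Delta}{LR-MQ}dx^2+\frac{\Delta}{MP-KR}dy^2+\frac{\Delta}{KQ-LP}dz^2$$ and the quadratic forms $$I_2=\frac{\Delta(GQ-FR)}{(LR-MQ)^2}dx^2+\frac{\Delta(ER-GP)}{(MP-KR)^2}dy^2+\frac{\Delta(FP-EQ)}{(KQ-LP)^2}dz^2,$$ $$I_3=\frac{\Delta(FM-GL)}{(LR-MQ)^2}dx^2+\frac{\Delta(GK-EM)}{(MP-KR)^2}dy^2+\frac{\Delta(EL-FK)}{(KQ-LP)^2}dz^2,$$ which are (classically known) first integrals, quadratic in velocities, of the geodesic flow of $g$. Fix constants $\lambda,\mu\in\mathbb{R}$ such that on an open set $U$ the equations $I_2-\lambda g=0$, $I_3-\mu g=0$ define at each point $m\in U$ four distinct real points of $PT_mM$, giving four direction fields $\tau_1,\dots,\tau_4$. Then: the integral curves of each $\tau_i$ are geodesics of $g$; at each point there are three mutually orthogonal planes $\pi_1,\pi_2,\pi_3\subset T_mM$ (namely the tangent planes to the coordinate surfaces $x=\mathrm{const}$, $y=\mathrm{const}$, $z=\mathrm{const}$) such that, for any fixed $k$, the reflections in $\pi_1,\pi_2,\pi_3$ map $\tau_k$ onto the other three directions; and the distributions $\pi_1,\pi_2,\pi_3$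 are integrable.
   Context: Quadratic forms such as $dx^2$ are evaluated on tangent vectors (velocities). A direction field is a smooth field of lines in $TM$. *)

From Stdlib Require Import Reals Lra.
From Coquelicot Require Import Coquelicot.
Open Scope R_scope.

(* Points of the coordinate chart and tangent vectors, both as triples. *)
Record V3 := mkV3 { vx : R ; vy : R ; vz : R }.

Definition coord (v : V3) (k : nat) : R :=
  match k with 1%nat => vx v | 2%nat => vy v | 3%nat => vz v | _ => 0 end.

Definition setc (m : V3) (k : nat) (t : R) : V3 :=
  match k with
  | 1%nat => mkV3 t (vy m) (vz m)
  | 2%nat => mkV3 (vx m) t (vz m)
  | 3%nat => mkV3 (vx m) (vy m) t
  | _ => m end.

Definition e_ (k : nat) : V3 :=
  mkV3 (if Nat.eqb k 1 then 1 else 0) (if Nat.eqb k 2 then 1 else 0)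
       (if Nat.eqb k 3 then 1 else 0).

Definition v3scale (c : R) (v : V3) : V3 := mkV3 (c * vx v) (c * vy v) (c * vz v).
Definition v3sub (v w : V3) : V3 := mkV3 (vx v - vx w) (vy v - vy w) (vz v - vz w).
Definition v3zero : V3 := mkV3 0 0 0.

Definition partial (k : nat) (f : V3 -> R) (m : V3) : R :=
  Derive (fun t => f (setc m k t)) (coord m k).

Definition open_in_R3 (U : V3 -> Prop) : Prop :=
  forall m, U m -> exists eps, eps > 0 /\
    forall m', Rabs (vx m' - vx m) < eps -> Rabs (vy m' - vy m) < eps ->
               Rabs (vz m' - vz m) < eps -> U m'.

Definition smooth_at (f : R -> R) (t : R) : Prop := forall n, ex_derive_n f n t.

Record StackelData := mkStackel {
  fE : R -> R ; fK : R -> R ; fP : R -> R ;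
  fF : R -> R ; fL : R -> R ; fQ : R -> R ;
  fG : R -> R ; fM : R -> R ; fR : R -> R }.

Section Stackel.
Variable S : StackelData.
Let E m := fE S (vx m). Let K m := fK S (vx m). Let P m := fP S (vx m).
Let F m := fF S (vy m). Let L m := fL S (vy m). Let Q m := fQ S (vy m).
Let G m := fG S (vz m). Let M m := fM S (vz m). Let Rr m := fR S (vz m).

Definition stDelta (m : V3) : R :=
  E m * L m * Rr m + F m * M m * P m + G m * K m * Q m
  - E m * M m * Q m - F m * K m * Rr m - G m * L m * P m.
Definition D1 (m : V3) : R := L m * Rr m - M m * Q m.
Definition D2 (m : V3) : R := M m * P m - K m * Rr m.
Definition D3 (m : V3) : R := K m * Q m - L m * P m.

Definition gc (k : nat) (m : V3) : R :=
  match k with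
  | 1%nat => stDelta m / D1 m
  | 2%nat => stDelta m / D2 m
  | 3%nat => stDelta m / D3 m
  | _ => 0 end.
Definition I2c (k : nat) (m : V3) : R :=
  match k with
  | 1%nat => stDelta m * (G m * Q m - F m * Rr m) / (D1 m) ^ 2
  | 2%nat => stDelta m * (E m * Rr m - G m * P m) / (D2 m) ^ 2
  | 3%nat => stDelta m * (F m * P m - E m * Q m) / (D3 m) ^ 2
  | _ => 0 end.
Definition I3c (k : nat) (m : V3) : R :=
  match k with
  | 1%nat => stDelta m * (F m * M m - G m * L m) / (D1 m) ^ 2
  | 2%nat => stDelta m * (G m * K m - E m * M m) / (D2 m) ^ 2
  | 3%nat => stDelta m * (E m * L m - F m * K m) / (D3 m) ^ 2
  | _ => 0 end.
End Stackel.

Definition qf (c : nat -> V3 -> R) (m v : V3) : R :=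
  c 1%nat m * (vx v) ^ 2 + c 2%nat m * (vy v) ^ 2 + c 3%nat m * (vz v) ^ 2.

Definition gbil (S : StackelData) (m v w : V3) : R :=
  gc S 1 m * vx v * vx w + gc S 2 m * vy v * vy w + gc S 3 m * vz v * vz w.

Definition on_cone (S : StackelData) (lam mu : R) (m v : V3) : Prop :=
  v <> v3zero /\
  qf (I2c S) m v - lam * qf (gc S) m v = 0 /\
  qf (I3c S) m v - mu * qf (gc S) m v = 0.

(* v and w define the same point of the projectivized tangent space *)
Definition same_line (v w : V3) : Prop := exists c, c <> 0 /\ w = v3scale c v.

Definition four_directions (S : StackelData) (lam mu : R) (m : V3) : Prop :=
  exists v1 v2 v3 v4 : V3,
    on_cone S lam mu m v1 /\ on_cone S lam mu m v2 /\
    on_cone S lam mu m v3 /\ on_cone S lam mu m v4 /\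
    ~ same_line v1 v2 /\ ~ same_line v1 v3 /\ ~ same_line v1 v4 /\
    ~ same_line v2 v3 /\ ~ same_line v2 v4 /\ ~ same_line v3 v4 /\
    forall v, on_cone S lam mu m v ->
      same_line v1 v \/ same_line v2 v \/ same_line v3 v \/ same_line v4 v.

Definition vel (gam : R -> V3) (t : R) : V3 :=
  mkV3 (Derive (fun s => vx (gam s)) t) (Derive (fun s => vy (gam s)) t)
       (Derive (fun s => vz (gam s)) t).

Definition regular_curve (U : V3 -> Prop) (a b : R) (gam : R -> V3) : Prop :=
  a < b /\
  forall t, a < t < b ->
    U (gam t) /\
    (forall k, (1 <= k <= 3)%nat ->
       ex_derive (fun s => coord (gam s) k) t /\
       ex_derive (Derive (fun s => coord (gam s) k)) t) /\
    vel gam t <> v3zero.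

(* gam is a (not necessarily affinely parametrized) geodesic of g:
   nabla_{gam'} gam' is proportional to gam'; written with lowered index
   d/dt (g_kk gam'^k) - 1/2 sum_i d_k g_ii (gam'^i)^2 = h(t) g_kk gam'^k. *)
Definition pregeodesic (S : StackelData) (a b : R) (gam : R -> V3) : Prop :=
  exists h : R -> R, forall t, a < t < b -> forall k, (1 <= k <= 3)%nat ->
    Derive (fun s => gc S k (gam s) * coord (vel gam s) k) t
    - / 2 * (partial k (gc S 1) (gam t) * (vx (vel gam t)) ^ 2
             + partial k (gc S 2) (gam t) * (vy (vel gam t)) ^ 2
             + partial k (gc S 3) (gam t) * (vz (vel gam t)) ^ 2)
    = h t * gc S k (gam t) * coord (vel gam t) k.

(* the plane pi_k at a point: kernel of dx_k, i.e. tangent plane to the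
   coordinate surface x_k = const *)
Definition in_pi (k : nat) (v : V3) : Prop := coord v k = 0.

Definition greflect (S : StackelData) (m n v : V3) : V3 :=
  v3sub v (v3scale (2 * gbil S m v n / gbil S m n n) n).

(* Frobenius integrability (alpha /\ d alpha = 0) on U of the plane field
   ker alpha, for a nowhere-vanishing 1-form alpha *)
Definition curl (alpha : V3 -> V3) (m : V3) : V3 :=
  mkV3 (partial 2 (fun p => vz (alpha p)) m - partial 3 (fun p => vy (alpha p)) m)
       (partial 3 (fun p => vx (alpha p)) m - partial 1 (fun p => vz (alpha p)) m)
       (partial 1 (fun p => vy (alpha p)) m - partial 2 (fun p => vx (alpha p)) m).
Definition frobenius_integrable (U : V3 -> Prop) (alpha : V3 -> V3) : Prop :=
  forall m, U m -> alpha m <> v3zero /\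
    vx (alpha m) * vx (curl alpha m) + vy (alpha m) * vy (curl alpha m)
    + vz (alpha m) * vz (curl alpha m) = 0.

(* On the cone {I2 = lam g, I3 = mu g} the Staeckel structure separates the velocity:
   (g_kk v^k)^2 = g(v,v) phi_k(x_k), where phi_1 = E + lam K + mu P, phi_2 = F + lam L + mu Q
   and phi_3 = G + lam M + mu R.  Differentiating this along an integral curve, and using
   that sum_i phi_i / g_ii = 1 identically, gives the geodesic equation up to
   reparametrisation.  The cone is cut out by two diagonal quadrics, so it is invariant under
   the sign changes of the coordinates, which are the g-reflections in the coordinate planes.
   When the cone has exactly four directions, none of them lies in a coordinate plane: a
   direction off the coordinate planes has four distinct sign images, which with a direction
   in a coordinate plane would make five, and three directions in one coordinate plane force
   the whole plane into the cone.  So each reflection moves every direction to another one.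
   The coordinate planes ker dx_k are integrable because dx_k is closed. *)

From Stdlib Require Import Reals Lra Lia Classical.
From Coquelicot Require Import Coquelicot.
Open Scope R_scope.
Set Bullet Behavior "Strict Subproofs".

Lemma same_line_sym v w : same_line v w -> same_line w v.
Proof.
  intros [c [Hc ->]]. exists (/ c). split; [now apply Rinv_neq_0_compat |].
  destruct v as [x y z]; unfold v3scale; simpl; f_equal; field; assumption.
Qed.

Lemma same_line_trans u v w : same_line u v -> same_line v w -> same_line u w.
Proof.
  intros [c [Hc ->]] [d [Hd ->]]. exists (d * c).
  split; [now apply Rmult_integral_contrapositive |].
  destruct u as [x y z]; unfold v3scale; simpl; f_equal; ring.
Qed.

Lemma coord_scale c v k : coord (v3scale c v) k = c * coord v k.
Proof. destruct k as [|[|[|[|k]]]]; simpl; ring. Qed.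

Lemma not_same_line_zero_coord v w k :
  coord v k = 0 -> coord w k <> 0 -> ~ same_line v w.
Proof. intros Hv Hw [c [_ ->]]. apply Hw. now rewrite coord_scale, Hv, Rmult_0_r. Qed.

Lemma not_same_line_sign_change v w i j :
  coord w i = coord v i -> coord v i <> 0 ->
  coord w j = - coord v j -> coord v j <> 0 -> ~ same_line v w.
Proof.
  intros Ei Hi Ej Hj [c [_ Ew]]. rewrite Ew, coord_scale in Ei, Ej.
  assert (c = 1) by (apply (Rmult_eq_reg_r (coord v i)); lra).
  subst c. lra.
Qed.

Ltac solve_sign_change :=
  let go i j := solve [apply (not_same_line_sign_change _ _ i j); simpl;
                       auto using Ropp_neq_0_compat; ring] in
  first [go 1%nat 2%nat | go 1%nat 3%nat | go 2%nat 1%nat | go 2%nat 3%nat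
        | go 3%nat 1%nat | go 3%nat 2%nat].

Lemma cross_x_of_same_line v w : same_line v w -> vy v * vz w = vy w * vz v.
Proof. intros [c [_ ->]]. simpl. ring. Qed.

Lemma same_line_of_cross_x v w :
  v <> v3zero -> w <> v3zero -> vx v = 0 -> vx w = 0 ->
  vy v * vz w = vy w * vz v -> same_line v w.
Proof.
  destruct v as [x y z], w as [x' y' z']; simpl; intros Hv Hw -> -> E.
  destruct (Req_dec y 0) as [Hy|Hy].
  - subst y. assert (Hz : z <> 0) by (intro; subst; apply Hv; reflexivity).
    assert (y' = 0) by (apply (Rmult_eq_reg_r z); lra). subst y'.
    assert (Hz' : z' <> 0) by (intro; subst; apply Hw; reflexivity).
    exists (z' / z). split; [apply Rmult_integral_contrapositive_currified; auto with real |].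
    unfold v3scale; simpl; f_equal; field; assumption.
  - assert (Hy' : y' <> 0).
    { intro; subst y'. apply Hw. assert (z' = 0) by (apply (Rmult_eq_reg_l y); lra).
      now subst. }
    exists (y' / y). split; [apply Rmult_integral_contrapositive_currified; auto with real |].
    unfold v3scale; simpl; f_equal; [ring | field; assumption |].
    apply (Rmult_eq_reg_l y); [| assumption]. field_simplify; [lra | assumption].
Qed.

Definition four_lines (C : V3 -> Prop) : Prop :=
  exists v1 v2 v3 v4 : V3,
    C v1 /\ C v2 /\ C v3 /\ C v4 /\
    ~ same_line v1 v2 /\ ~ same_line v1 v3 /\ ~ same_line v1 v4 /\
    ~ same_line v2 v3 /\ ~ same_line v2 v4 /\ ~ same_line v3 v4 /\
    forall v, C v -> same_line v1 v \/ same_line v2 v \/ same_line v3 v \/ same_line v4 v.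

Lemma four_lines_no_five C w1 w2 w3 w4 w5 :
  four_lines C -> C w1 -> C w2 -> C w3 -> C w4 -> C w5 ->
  ~ same_line w1 w2 -> ~ same_line w1 w3 -> ~ same_line w1 w4 -> ~ same_line w1 w5 ->
  ~ same_line w2 w3 -> ~ same_line w2 w4 -> ~ same_line w2 w5 ->
  ~ same_line w3 w4 -> ~ same_line w3 w5 -> ~ same_line w4 w5 -> False.
Proof.
  intros (v1 & v2 & v3 & v4 & _ & _ & _ & _ & _ & _ & _ & _ & _ & _ & Hall)
    C1 C2 C3 C4 C5 N12 N13 N14 N15 N23 N24 N25 N34 N35 N45.
  (* pigeonhole: two of the five lie on the same of the four lines *)
  assert (Hpig : forall v w w', same_line v w -> same_line v w' -> ~ same_line w w' -> False)
    by (intros v w w' H H' N; apply N, (same_line_trans _ v); [apply same_line_sym |]; assumption).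
  destruct (Hall _ C1) as [A1|[A1|[A1|A1]]];
  destruct (Hall _ C2) as [A2|[A2|[A2|A2]]];
  destruct (Hall _ C3) as [A3|[A3|[A3|A3]]];
  destruct (Hall _ C4) as [A4|[A4|[A4|A4]]];
  destruct (Hall _ C5) as [A5|[A5|[A5|A5]]];
  match goal with
  | N : ~ same_line ?w ?w', H : same_line ?v ?w, H' : same_line ?v ?w' |- _ =>
      exact (Hpig _ _ _ H H' N)
  end.
Qed.

Lemma same_line_map (sg : V3 -> V3) v w :
  (forall c v, sg (v3scale c v) = v3scale c (sg v)) ->
  same_line v w -> same_line (sg v) (sg w).
Proof. intros Sc [c [Hc ->]]. exists c. rewrite Sc. auto. Qed.

Lemma four_lines_transport (sg : V3 -> V3) (C C' : V3 -> Prop) :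
  (forall v, sg (sg v) = v) ->
  (forall c v, sg (v3scale c v) = v3scale c (sg v)) ->
  (forall v, C' v <-> C (sg v)) ->
  four_lines C -> four_lines C'.
Proof.
  intros Inv Sc HC
    (v1 & v2 & v3 & v4 & C1 & C2 & C3 & C4 & N12 & N13 & N14 & N23 & N24 & N34 & Hall).
  assert (Hsl : forall v w, same_line v w -> same_line (sg v) (sg w))
    by (intros v w; now apply same_line_map).
  assert (Hsl' : forall v w, same_line (sg v) (sg w) -> same_line v w)
    by (intros v w H; rewrite <- (Inv v), <- (Inv w); auto).
  assert (HC' : forall v, C v -> C' (sg v)) by (intros v H; apply HC; now rewrite Inv).
  exists (sg v1), (sg v2), (sg v3), (sg v4).
  repeat split; auto.
  intros v Hv. apply HC in Hv. rewrite <- (Inv v).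
  destruct (Hall _ Hv) as [H|[H|[H|H]]]; auto 6.
Qed.

Definition diag_qf (a v : V3) : R := vx a * vx v ^ 2 + vy a * vy v ^ 2 + vz a * vz v ^ 2.

Definition diag_cone (a b v : V3) : Prop := v <> v3zero /\ diag_qf a v = 0 /\ diag_qf b v = 0.

Definition same_squares (v w : V3) : Prop :=
  vx w ^ 2 = vx v ^ 2 /\ vy w ^ 2 = vy v ^ 2 /\ vz w ^ 2 = vz v ^ 2.

Lemma same_squares_nonzero v w : same_squares v w -> v <> v3zero -> w <> v3zero.
Proof.
  destruct v as [x y z]; intros (Ex & Ey & Ez) Hv ->; simpl in *. apply Hv.
  unfold v3zero; f_equal; apply Rsqr_0_uniq; unfold Rsqr; lra.
Qed.

Lemma diag_cone_same_squares a b v w : diag_cone a b v -> same_squares v w -> diag_cone a b w.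
Proof.
  intros (Hv & Ha & Hb) Hs. split; [exact (same_squares_nonzero v w Hs Hv) |].
  destruct Hs as (Ex & Ey & Ez). unfold diag_qf in *. rewrite Ex, Ey, Ez. auto.
Qed.

Definition diag_involution (sg : V3 -> V3) : Prop :=
  (forall v, sg (sg v) = v) /\
  (forall c v, sg (v3scale c v) = v3scale c (sg v)) /\
  (forall a v, diag_qf (sg a) (sg v) = diag_qf a v).

Definition swap12 (v : V3) : V3 := mkV3 (vy v) (vx v) (vz v).
Definition swap13 (v : V3) : V3 := mkV3 (vz v) (vy v) (vx v).

Lemma swap12_involution : diag_involution swap12.
Proof.
  split; [| split]; [now intros [] | now intros c [] | intros [] []; unfold diag_qf; simpl; ring].
Qed.

Lemma swap13_involution : diag_involution swap13.
Proof.
  split; [| split]; [now intros [] | now intros c [] | intros [] []; unfold diag_qf; simpl; ring].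
Qed.

Section DiagInvolution.
Variable sg : V3 -> V3.
Hypothesis Hsg : diag_involution sg.

Lemma diag_cone_involution a b v : diag_cone a b v -> diag_cone (sg a) (sg b) (sg v).
Proof.
  destruct Hsg as (Inv & Sc & Hqf).
  assert (Z : sg v3zero = v3zero).
  { assert (Z : v3scale 0 v3zero = v3zero) by (unfold v3scale, v3zero; simpl; f_equal; ring).
    rewrite <- Z, Sc. unfold v3scale; simpl; f_equal; ring. }
  intros (Hv & Ha & Hb). unfold diag_cone. rewrite !Hqf. split; auto.
  intro E. apply Hv. now rewrite <- (Inv v), E, Z.
Qed.

Lemma not_same_line_involution v w : ~ same_line v w -> ~ same_line (sg v) (sg w).
Proof.
  destruct Hsg as (Inv & Sc & _). intros N S. apply N.
  rewrite <- (Inv v), <- (Inv w). now apply same_line_map.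
Qed.

Lemma four_lines_diag_cone_involution a b :
  four_lines (diag_cone a b) -> four_lines (diag_cone (sg a) (sg b)).
Proof.
  destruct Hsg as (Inv & Sc & _).
  apply four_lines_transport with (sg := sg); auto.
  intro v; split; intro H; pose proof (diag_cone_involution _ _ _ H) as H'; now rewrite !Inv in H'.
Qed.

End DiagInvolution.

Lemma diag_pair_zero a2 a3 y1 z1 y2 z2 :
  a2 * y1 ^ 2 + a3 * z1 ^ 2 = 0 -> a2 * y2 ^ 2 + a3 * z2 ^ 2 = 0 ->
  (y1 * z2 - y2 * z1) * (y1 * z2 + y2 * z1) <> 0 -> a2 = 0 /\ a3 = 0.
Proof.
  intros E1 E2 Hd.
  assert (A2 : a2 * ((y1 * z2 - y2 * z1) * (y1 * z2 + y2 * z1)) = 0).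
  { replace (a2 * _)
      with (z2 ^ 2 * (a2 * y1 ^ 2 + a3 * z1 ^ 2) - z1 ^ 2 * (a2 * y2 ^ 2 + a3 * z2 ^ 2))
      by ring. rewrite E1, E2. ring. }
  assert (A3 : a3 * ((y1 * z2 - y2 * z1) * (y1 * z2 + y2 * z1)) = 0).
  { replace (a3 * _)
      with (y1 ^ 2 * (a2 * y2 ^ 2 + a3 * z2 ^ 2) - y2 ^ 2 * (a2 * y1 ^ 2 + a3 * z1 ^ 2))
      by ring. rewrite E1, E2. ring. }
  apply Rmult_integral in A2, A3. tauto.
Qed.

Definition flip_x (v : V3) : V3 := mkV3 (- vx v) (vy v) (vz v).
Definition flip_y (v : V3) : V3 := mkV3 (vx v) (- vy v) (vz v).
Definition flip_z (v : V3) : V3 := mkV3 (vx v) (vy v) (- vz v).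

Lemma same_squares_flip_x v : same_squares v (flip_x v).
Proof. unfold same_squares, flip_x; simpl; repeat split; ring. Qed.
Lemma same_squares_flip_y v : same_squares v (flip_y v).
Proof. unfold same_squares, flip_y; simpl; repeat split; ring. Qed.
Lemma same_squares_flip_z v : same_squares v (flip_z v).
Proof. unfold same_squares, flip_z; simpl; repeat split; ring. Qed.

Lemma diag_cone_plane_x_three a b v1 v2 v3 :
  four_lines (diag_cone a b) ->
  diag_cone a b v1 -> diag_cone a b v2 -> diag_cone a b v3 ->
  ~ same_line v1 v2 -> ~ same_line v1 v3 -> ~ same_line v2 v3 ->
  vx v1 = 0 -> vx v2 = 0 -> vx v3 = 0 -> False.
Proof.
  intros F C1 C2 C3 N12 N13 N23 X1 X2 X3.
  assert (Hw : exists w, diag_cone a b w /\ vx w = 0 /\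
                         ~ same_line v1 w /\ ~ same_line (flip_z v1) w).
  { destruct (classic (same_line (flip_z v1) v2)) as [S2|S2].
    - exists v3. do 3 (split; [assumption |]). intro S3.
      apply N23, (same_line_trans _ (flip_z v1)); auto. now apply same_line_sym.
    - exists v2. auto. }
  destruct Hw as (w & Cw & Xw & N1w & Nfw).
  assert (Hd : (vy v1 * vz w - vy w * vz v1) * (vy v1 * vz w + vy w * vz v1) <> 0).
  { destruct C1 as (Z1 & _), Cw as (Zw & _).
    intro H. apply Rmult_integral in H as [H|H].
    - apply N1w, same_line_of_cross_x; auto. lra.
    - apply Nfw, same_line_of_cross_x; auto.
      + apply (same_squares_nonzero v1); auto. apply same_squares_flip_z.
      + simpl. lra. }
  destruct C1 as (_ & A1 & B1), Cw as (_ & Aw & Bw).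
  destruct a as [a1 a2 a3], b as [b1 b2 b3]; unfold diag_qf in *; simpl in *.
  rewrite X1 in A1, B1. rewrite Xw in Aw, Bw.
  destruct (diag_pair_zero a2 a3 (vy v1) (vz v1) (vy w) (vz w) ltac:(lra) ltac:(lra) Hd) as [-> ->].
  destruct (diag_pair_zero b2 b3 (vy v1) (vz v1) (vy w) (vz w) ltac:(lra) ltac:(lra) Hd) as [-> ->].
  assert (Hplane : forall y z, (y, z) <> (0, 0) ->
                    diag_cone (mkV3 a1 0 0) (mkV3 b1 0 0) (mkV3 0 y z)).
  { intros y z H. unfold diag_cone, diag_qf; simpl. split; [| split; ring].
    intro E. injection E as -> ->. now apply H. }
  assert (Hcross : forall y z y' z', y * z' <> y' * z -> ~ same_line (mkV3 0 y z) (mkV3 0 y' z'))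
    by (intros y z y' z' H S; apply H, (cross_x_of_same_line _ _ S)).
  apply (four_lines_no_five _ (mkV3 0 1 0) (mkV3 0 0 1) (mkV3 0 1 1) (mkV3 0 1 (-1))
           (mkV3 0 1 2) F);
    solve [apply Hplane; intro E; injection E; lra | apply Hcross; lra].
Qed.

Lemma diag_cone_plane_three_involution sg a b v1 v2 v3 :
  diag_involution sg -> four_lines (diag_cone a b) ->
  diag_cone a b v1 -> diag_cone a b v2 -> diag_cone a b v3 ->
  ~ same_line v1 v2 -> ~ same_line v1 v3 -> ~ same_line v2 v3 ->
  vx (sg v1) = 0 -> vx (sg v2) = 0 -> vx (sg v3) = 0 -> False.
Proof.
  intros Hsg F C1 C2 C3 N12 N13 N23.
  apply (diag_cone_plane_x_three (sg a) (sg b));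
    auto using four_lines_diag_cone_involution, diag_cone_involution, not_same_line_involution.
Qed.

Lemma sqrt_sum_squares_eq0 x y z : sqrt (x ^ 2 + y ^ 2 + z ^ 2) = 0 -> x = 0 /\ y = 0 /\ z = 0.
Proof. intro H. apply sqrt_eq_0 in H; [| nra]. repeat split; nra. Qed.

Definition sqrt_sum_squares (u v w : V3) : V3 :=
  mkV3 (sqrt (vx u ^ 2 + vx v ^ 2 + vx w ^ 2)) (sqrt (vy u ^ 2 + vy v ^ 2 + vy w ^ 2))
       (sqrt (vz u ^ 2 + vz v ^ 2 + vz w ^ 2)).

(* The cone is linear in the squared coordinates, so it is closed under adding squares. *)
Lemma diag_cone_sqrt_sum_squares a b u v w :
  diag_cone a b u -> diag_cone a b v -> diag_cone a b w ->
  diag_cone a b (sqrt_sum_squares u v w).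
Proof.
  intros (Zu & Au & Bu) (_ & Av & Bv) (_ & Aw & Bw).
  split; [| unfold diag_qf, sqrt_sum_squares in *; cbn [vx vy vz]].
  - intro E. injection E as Ex Ey Ez.
    apply sqrt_sum_squares_eq0 in Ex as (? & _), Ey as (? & _), Ez as (? & _).
    apply Zu. destruct u; simpl in *; subst; reflexivity.
  - rewrite !pow2_sqrt by nra. split; nra.
Qed.

Lemma diag_cone_x_nonzero a b v : four_lines (diag_cone a b) -> diag_cone a b v -> vx v <> 0.
Proof.
  intros F Cv Xv.
  destruct (classic (exists w, diag_cone a b w /\ vx w <> 0 /\ vy w <> 0 /\ vz w <> 0))
    as [(w & Cw & Hx & Hy & Hz) | Hnone].
  - (* w, its three sign flips and v are five distinct directions *)
    apply (four_lines_no_five _ w (flip_x w) (flip_y w) (flip_z w) v F); auto;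
      try (apply (diag_cone_same_squares a b w);
           auto using same_squares_flip_x, same_squares_flip_y, same_squares_flip_z);
      try (intro S; apply same_line_sym in S; revert S;
           apply (not_same_line_zero_coord _ _ 1); simpl; auto; lra).
    all: solve_sign_change.
  - (* otherwise the point built from the squares of three of the four directions has a
       zero coordinate, so those three directions lie in one coordinate plane *)
    pose proof F as (v1 & v2 & v3 & _ & C1 & C2 & C3 & _ & N12 & N13 & _ & N23 & _).
    assert (Hs := diag_cone_sqrt_sum_squares a b v1 v2 v3 C1 C2 C3).
    assert (Hcases : forall x y z, x = 0 \/ y = 0 \/ z = 0 \/ (x <> 0 /\ y <> 0 /\ z <> 0)).
    { intros x y z. destruct (Req_dec x 0), (Req_dec y 0), (Req_dec z 0); tauto. }
    destruct (Hcases (vx (sqrt_sum_squares v1 v2 v3)) (vy (sqrt_sum_squares v1 v2 v3))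
                    (vz (sqrt_sum_squares v1 v2 v3))) as [E|[E|[E|E]]];
      [| | | now apply Hnone; eauto]; simpl in E;
      apply sqrt_sum_squares_eq0 in E as (E1 & E2 & E3).
    + now apply (diag_cone_plane_x_three a b v1 v2 v3).
    + now apply (diag_cone_plane_three_involution swap12 a b v1 v2 v3 swap12_involution).
    + now apply (diag_cone_plane_three_involution swap13 a b v1 v2 v3 swap13_involution).
Qed.

Lemma diag_cone_coords_nonzero a b v :
  four_lines (diag_cone a b) -> diag_cone a b v -> vx v <> 0 /\ vy v <> 0 /\ vz v <> 0.
Proof.
  intros F C. split; [| split].
  - exact (diag_cone_x_nonzero a b v F C).
  - apply (diag_cone_x_nonzero (swap12 a) (swap12 b) (swap12 v));
      auto using four_lines_diag_cone_involution, diag_cone_involution, swap12_involution.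
  - apply (diag_cone_x_nonzero (swap13 a) (swap13 b) (swap13 v));
      auto using four_lines_diag_cone_involution, diag_cone_involution, swap13_involution.
Qed.

Definition coeff_vec (c : nat -> V3 -> R) (m : V3) : V3 := mkV3 (c 1%nat m) (c 2%nat m) (c 3%nat m).

Definition pencil (c d : nat -> V3 -> R) (t : R) (k : nat) (m : V3) : R := c k m - t * d k m.

Lemma qf_pencil c d t m v : qf c m v - t * qf d m v = diag_qf (coeff_vec (pencil c d t) m) v.
Proof. unfold qf, diag_qf, coeff_vec, pencil; simpl; ring. Qed.

Lemma on_cone_diag_cone S lam mu m v :
  on_cone S lam mu m v <->
  diag_cone (coeff_vec (pencil (I2c S) (gc S) lam) m) (coeff_vec (pencil (I3c S) (gc S) mu) m) v.
Proof. unfold on_cone, diag_cone. now rewrite !qf_pencil. Qed.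

Lemma on_cone_coords_nonzero S lam mu m v :
  four_directions S lam mu m -> on_cone S lam mu m v -> vx v <> 0 /\ vy v <> 0 /\ vz v <> 0.
Proof.
  intros F C. apply on_cone_diag_cone in C. revert C. apply diag_cone_coords_nonzero.
  (* [four_directions S lam mu m] unfolds to [four_lines (on_cone S lam mu m)] *)
  apply (four_lines_transport (fun v => v) (on_cone S lam mu m)); auto.
  intro w. symmetry. apply on_cone_diag_cone.
Qed.

Definition stackel_entry (S : StackelData) (k j : nat) : R -> R :=
  match k, j with
  | 1, 1 => fE S | 1, 2 => fK S | 1, _ => fP S
  | 2, 1 => fF S | 2, 2 => fL S | 2, _ => fQ S
  | _, 1 => fG S | _, 2 => fM S | _, _ => fR S
  end%nat.

Definition stackel_phi (S : StackelData) (lam mu : R) (k : nat) (u : R) : R :=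
  stackel_entry S k 1 u + lam * stackel_entry S k 2 u + mu * stackel_entry S k 3 u.

Definition stackel_nondegenerate (S : StackelData) (m : V3) : Prop :=
  stDelta S m <> 0 /\ D1 S m <> 0 /\ D2 S m <> 0 /\ D3 S m <> 0.

Definition stackel_derivable (S : StackelData) (m : V3) : Prop :=
  ex_derive (fE S) (vx m) /\ ex_derive (fK S) (vx m) /\ ex_derive (fP S) (vx m) /\
  ex_derive (fF S) (vy m) /\ ex_derive (fL S) (vy m) /\ ex_derive (fQ S) (vy m) /\
  ex_derive (fG S) (vz m) /\ ex_derive (fM S) (vz m) /\ ex_derive (fR S) (vz m).

Lemma stackel_derivable_entry S m k j :
  stackel_derivable S m -> (1 <= k <= 3)%nat -> ex_derive (stackel_entry S k j) (coord m k).
Proof.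
  intros (dE & dK & dP & dF & dL & dQ & dG & dM & dR) Hk.
  destruct k as [|[|[|[|k]]]]; try lia; destruct j as [|[|[|j]]]; assumption.
Qed.

Lemma gc_nonzero S k m : (1 <= k <= 3)%nat -> stackel_nondegenerate S m -> gc S k m <> 0.
Proof.
  intros Hk (H0 & H1 & H2 & H3).
  destruct k as [|[|[|[|k]]]]; try lia;
    apply Rmult_integral_contrapositive_currified; auto with real.
Qed.

Lemma stackel_separation_identity S lam mu m v k :
  (1 <= k <= 3)%nat -> stackel_nondegenerate S m ->
  (gc S k m * coord v k) ^ 2 - qf (gc S) m v * stackel_phi S lam mu k (coord m k)
  = stackel_entry S k 2 (coord m k) * (qf (I2c S) m v - lam * qf (gc S) m v)
    + stackel_entry S k 3 (coord m k) * (qf (I3c S) m v - mu * qf (gc S) m v).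
Proof.
  intros Hk (H0 & H1 & H2 & H3).
  destruct k as [|[|[|[|k]]]]; try lia;
    unfold qf, gc, I2c, I3c, stackel_phi, stDelta, D1, D2, D3 in *; simpl; field; auto.
Qed.

Lemma on_cone_separation S lam mu m v k :
  (1 <= k <= 3)%nat -> stackel_nondegenerate S m -> on_cone S lam mu m v ->
  (gc S k m * coord v k) ^ 2 = qf (gc S) m v * stackel_phi S lam mu k (coord m k).
Proof.
  intros Hk Hn (_ & E2 & E3).
  pose proof (stackel_separation_identity S lam mu m v k Hk Hn) as Id.
  rewrite E2, E3 in Id. lra.
Qed.

Lemma partial_of k f m d : is_derive (fun t => f (setc m k t)) (coord m k) d -> partial k f m = d.
Proof. apply is_derive_unique. Qed.

Lemma is_derive_stackel_phi S lam mu k u :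
  (forall j, ex_derive (stackel_entry S k j) u) ->
  is_derive (stackel_phi S lam mu k) u
    (Derive (stackel_entry S k 1) u + lam * Derive (stackel_entry S k 2) u
     + mu * Derive (stackel_entry S k 3) u).
Proof.
  intro Hd. unfold stackel_phi.
  generalize (Hd 1%nat) (Hd 2%nat) (Hd 3%nat).
  generalize (stackel_entry S k 1) (stackel_entry S k 2) (stackel_entry S k 3).
  intros f1 f2 f3 D1 D2 D3. auto_derive; auto.
  change (fun x => f1 x) with f1; change (fun x => f2 x) with f2; change (fun x => f3 x) with f3.
  ring.
Qed.

(* Differentiate sum_i phi_i / g_ii = 1 along x_k; the sum is 1 because
   1 / g_ii = D_i / Delta and D_1, D_2, D_3 are the cofactors of the first column. *)
Lemma stackel_partial_identity S lam mu m k :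
  (1 <= k <= 3)%nat -> stackel_derivable S m -> stackel_nondegenerate S m ->
  partial k (gc S 1) m * (stackel_phi S lam mu 1 (vx m) / gc S 1 m ^ 2)
  + partial k (gc S 2) m * (stackel_phi S lam mu 2 (vy m) / gc S 2 m ^ 2)
  + partial k (gc S 3) m * (stackel_phi S lam mu 3 (vz m) / gc S 3 m ^ 2)
  = Derive (stackel_phi S lam mu k) (coord m k) / gc S k m.
Proof.
  intros Hk Hd (H0 & H1 & H2 & H3).
  rewrite (is_derive_unique _ _ _ (is_derive_stackel_phi S lam mu k _
             (fun j => stackel_derivable_entry S m k j Hd Hk))).
  pose proof (stackel_derivable_entry S m k 1 Hd Hk) as d1;
    pose proof (stackel_derivable_entry S m k 2 Hd Hk) as d2;
    pose proof (stackel_derivable_entry S m k 3 Hd Hk) as d3.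
  destruct k as [|[|[|[|k]]]]; try lia; simpl in d1, d2, d3 |- *.
  all: do 3 (erewrite partial_of;
        [| unfold gc, stDelta, D1, D2, D3, setc; cbn [vx vy vz coord];
           auto_derive; [repeat split; assumption | reflexivity]]).
  all: repeat match goal with
              |- context [fun x : R => ?f x] => change (fun x : R => f x) with f
              end.
  all: unfold stackel_phi, gc, stDelta, D1, D2, D3, Rminus in *; simpl; field; auto.
Qed.

Lemma on_cone_metric_gradient S lam mu m v k :
  (1 <= k <= 3)%nat -> stackel_derivable S m -> stackel_nondegenerate S m ->
  on_cone S lam mu m v ->
  (partial k (gc S 1) m * vx v ^ 2 + partial k (gc S 2) m * vy v ^ 2
   + partial k (gc S 3) m * vz v ^ 2) * gc S k m
  = qf (gc S) m v * Derive (stackel_phi S lam mu k) (coord m k).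
Proof.
  intros Hk Hd Hn Hv.
  assert (Hsq : forall i, (1 <= i <= 3)%nat ->
            coord v i ^ 2 = qf (gc S) m v * (stackel_phi S lam mu i (coord m i) / gc S i m ^ 2)).
  { intros i Hi. pose proof (gc_nonzero S i m Hi Hn).
    transitivity ((gc S i m * coord v i) ^ 2 / gc S i m ^ 2); [field; auto |].
    rewrite (on_cone_separation S lam mu m v i Hi Hn Hv). field. auto. }
  change (vx v) with (coord v 1); change (vy v) with (coord v 2); change (vz v) with (coord v 3).
  rewrite (Hsq 1%nat), (Hsq 2%nat), (Hsq 3%nat) by lia. simpl coord.
  transitivity
    (qf (gc S) m v * (Derive (stackel_phi S lam mu k) (coord m k) / gc S k m) * gc S k m).
  - rewrite <- (stackel_partial_identity S lam mu m k Hk Hd Hn). ring.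
  - field. now apply gc_nonzero.
Qed.

Definition covelocity (S : StackelData) (gam : R -> V3) (k : nat) (s : R) : R :=
  gc S k (gam s) * coord (vel gam s) k.

Definition sq_speed (S : StackelData) (gam : R -> V3) (s : R) : R := qf (gc S) (gam s) (vel gam s).

Lemma vel_coord gam t k :
  (1 <= k <= 3)%nat -> coord (vel gam t) k = Derive (fun s => coord (gam s) k) t.
Proof. intro Hk. destruct k as [|[|[|[|k]]]]; try lia; reflexivity. Qed.

Lemma ex_derive_gc_comp S j (X Y Z : R -> R) t :
  (1 <= j <= 3)%nat -> ex_derive X t -> ex_derive Y t -> ex_derive Z t ->
  stackel_derivable S (mkV3 (X t) (Y t) (Z t)) ->
  stackel_nondegenerate S (mkV3 (X t) (Y t) (Z t)) ->
  ex_derive (fun s => gc S j (mkV3 (X s) (Y s) (Z s))) t.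
Proof.
  intros Hj dX dY dZ (dE & dK & dP & dF & dL & dQ & dG & dM & dR) (H0 & H1 & H2 & H3).
  unfold stDelta, D1, D2, D3 in *; cbn [vx vy vz] in *.
  destruct j as [|[|[|[|j]]]]; try lia;
    unfold gc, stDelta, D1, D2, D3; cbn [vx vy vz]; auto_derive; repeat split; assumption.
Qed.

Lemma ex_derive_diag_sum (c1 c2 c3 w1 w2 w3 : R -> R) t :
  ex_derive c1 t -> ex_derive c2 t -> ex_derive c3 t ->
  ex_derive w1 t -> ex_derive w2 t -> ex_derive w3 t ->
  ex_derive (fun s => c1 s * w1 s ^ 2 + c2 s * w2 s ^ 2 + c3 s * w3 s ^ 2) t.
Proof. intros. auto_derive. repeat split; assumption. Qed.

Section CurveOnCone.
Variables (S : StackelData) (U : V3 -> Prop) (lam mu a b : R) (gam : R -> V3).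
Hypothesis HN : forall m, U m -> stackel_nondegenerate S m.
Hypothesis HD : forall m, U m -> stackel_derivable S m.
Hypothesis HF : forall m, U m -> four_directions S lam mu m.
Hypothesis Hgam : regular_curve U a b gam.
Hypothesis Hcone : forall t, a < t < b -> on_cone S lam mu (gam t) (vel gam t).

Lemma ex_derive_gc_curve j t :
  a < t < b -> (1 <= j <= 3)%nat -> ex_derive (fun s => gc S j (gam s)) t.
Proof.
  intros Ht Hj. destruct Hgam as [_ Hreg]. destruct (Hreg t Ht) as (Ut & Hc & _).
  destruct (Hc 1%nat) as [dx _]; [lia |]. destruct (Hc 2%nat) as [dy _]; [lia |].
  destruct (Hc 3%nat) as [dz _]; [lia |].
  apply (ex_derive_ext (fun s => gc S j (mkV3 (vx (gam s)) (vy (gam s)) (vz (gam s))))).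
  - intro s. now destruct (gam s).
  - apply ex_derive_gc_comp; auto; destruct (gam t); auto.
Qed.

Lemma covelocity_sq k s :
  (1 <= k <= 3)%nat -> a < s < b ->
  covelocity S gam k s ^ 2 = sq_speed S gam s * stackel_phi S lam mu k (coord (gam s) k).
Proof.
  intros Hk Hs. destruct Hgam as [_ Hreg]. destruct (Hreg s Hs) as (Us & _).
  apply on_cone_separation; auto.
Qed.

Lemma covelocity_sq_derive k t :
  (1 <= k <= 3)%nat -> a < t < b ->
  2 * covelocity S gam k t * Derive (covelocity S gam k) t
  = Derive (sq_speed S gam) t * stackel_phi S lam mu k (coord (gam t) k)
    + sq_speed S gam t
      * (Derive (stackel_phi S lam mu k) (coord (gam t) k) * coord (vel gam t) k).
Proof.
  intros Hk Ht. destruct Hgam as [_ Hreg]. destruct (Hreg t Ht) as (Ut & Hc & _).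
  assert (Hvel : forall i, (1 <= i <= 3)%nat -> ex_derive (fun s => coord (vel gam s) i) t).
  { intros i Hi. apply (ex_derive_ext (Derive (fun s => coord (gam s) i))).
    - intro s. now rewrite vel_coord.
    - apply Hc, Hi. }
  assert (dp : ex_derive (covelocity S gam k) t)
    by (apply (ex_derive_mult (fun s => gc S k (gam s))); auto using ex_derive_gc_curve).
  assert (dH : ex_derive (sq_speed S gam) t).
  { apply (ex_derive_diag_sum (fun s => gc S 1 (gam s)) (fun s => gc S 2 (gam s))
             (fun s => gc S 3 (gam s)) (fun s => coord (vel gam s) 1)
             (fun s => coord (vel gam s) 2) (fun s => coord (vel gam s) 3));
      [apply (ex_derive_gc_curve 1) | apply (ex_derive_gc_curve 2) | apply (ex_derive_gc_curve 3)
      | apply (Hvel 1%nat) | apply (Hvel 2%nat) | apply (Hvel 3%nat)]; auto; lia. }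
  assert (dphi : ex_derive (stackel_phi S lam mu k) (coord (gam t) k)).
  { eexists. apply is_derive_stackel_phi. intro j. apply stackel_derivable_entry; auto. }
  destruct (Hc k Hk) as [dx _].
  pose proof (is_derive_comp (stackel_phi S lam mu k) (fun s => coord (gam s) k) t _ _
                (Derive_correct _ _ dphi) (Derive_correct _ _ dx)) as Hphi.
  pose proof (is_derive_mult (sq_speed S gam) _ t _ _ (Derive_correct _ _ dH) Hphi
                ltac:(intros; apply Rmult_comm)) as Hprod.
  unfold mult, plus, scal in Hprod; simpl in Hprod; unfold mult in Hprod; simpl in Hprod.
  (* covelocity_sq holds on the open interval (a, b), so both sides have the same derivative *)
  assert (Hloc : locally t (fun s => sq_speed S gam s * stackel_phi S lam mu k (coord (gam s) k)
                                     = covelocity S gam k s ^ 2)).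
  { apply (filter_imp (fun s => a < s < b)); [intros s Hs; symmetry; now apply covelocity_sq |].
    exact (open_and _ _ (open_gt a) (open_lt b) t Ht). }
  apply (is_derive_ext_loc _ _ _ _ Hloc), is_derive_unique in Hprod.
  pose proof (is_derive_unique _ _ _ (is_derive_pow _ 2 t _ (Derive_correct _ _ dp))) as Hpow.
  rewrite vel_coord by exact Hk.
  transitivity (INR 2 * Derive (covelocity S gam k) t * covelocity S gam k t ^ Nat.pred 2);
    [simpl; ring |].
  rewrite <- Hpow. etransitivity; [exact Hprod | ring].
Qed.

Lemma cone_curve_pregeodesic : pregeodesic S a b gam.
Proof.
  exists (fun t => Derive (sq_speed S gam) t / (2 * sq_speed S gam t)).
  intros t Ht k Hk.
  destruct Hgam as [_ Hreg]. destruct (Hreg t Ht) as (Ut & _).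
  change (Derive (fun s => gc S k (gam s) * coord (vel gam s) k) t)
    with (Derive (covelocity S gam k) t).
  pose proof (covelocity_sq k t Hk Ht) as Hsq.
  pose proof (covelocity_sq_derive k t Hk Ht) as Hder.
  pose proof (on_cone_metric_gradient S lam mu (gam t) (vel gam t) k Hk (HD _ Ut) (HN _ Ut)
                (Hcone t Ht)) as Hgrad.
  fold (sq_speed S gam t) in Hgrad.
  assert (Hg : gc S k (gam t) <> 0) by (apply gc_nonzero; auto).
  assert (Hv : coord (vel gam t) k <> 0).
  { destruct (on_cone_coords_nonzero S lam mu (gam t) (vel gam t) (HF _ Ut) (Hcone t Ht))
      as (? & ? & ?).
    destruct k as [|[|[|[|k]]]]; try lia; assumption. }
  assert (Hp : covelocity S gam k t <> 0) by (now apply Rmult_integral_contrapositive_currified).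
  assert (HH : sq_speed S gam t <> 0).
  { intro Z. rewrite Z, Rmult_0_l in Hsq. exact (pow_nonzero _ 2 Hp Hsq). }
  set (T := partial k (gc S 1) (gam t) * vx (vel gam t) ^ 2 + _ + _) in *.
  set (H := sq_speed S gam t) in *.
  set (p := covelocity S gam k t) in *.
  assert (Ep : p = gc S k (gam t) * coord (vel gam t) k) by reflexivity.
  apply (Rmult_eq_reg_r (2 * p * H)); [| now repeat apply Rmult_integral_contrapositive_currified].
  (* combine 2 p p' = H' phi + H phi' v, T g = H phi' and p^2 = H phi *)
  transitivity (H * (2 * p * Derive (covelocity S gam k) t)
                - T * gc S k (gam t) * coord (vel gam t) k * H); [rewrite Ep; field |].
  rewrite Hder, Hgrad.
  transitivity (Derive (sq_speed S gam) t * p ^ 2); [rewrite Hsq; ring |].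
  rewrite Ep. field. exact HH.
Qed.

End CurveOnCone.

Lemma gbil_e S m k w : (1 <= k <= 3)%nat -> gbil S m (e_ k) w = gc S k m * coord w k.
Proof. intro Hk. destruct k as [|[|[|[|k]]]]; try lia; unfold gbil, e_; simpl; ring. Qed.

Lemma coordinate_normals_orthogonal S m :
  stackel_nondegenerate S m ->
  (forall k, (1 <= k <= 3)%nat ->
     gbil S m (e_ k) (e_ k) <> 0 /\ forall w, in_pi k w -> gbil S m (e_ k) w = 0) /\
  gbil S m (e_ 1) (e_ 2) = 0 /\ gbil S m (e_ 1) (e_ 3) = 0 /\ gbil S m (e_ 2) (e_ 3) = 0.
Proof.
  intro Hn. split; [| repeat split; rewrite gbil_e by lia; simpl; ring].
  intros k Hk. split.
  - rewrite gbil_e by exact Hk.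
    replace (coord (e_ k) k) with 1 by (destruct k as [|[|[|[|k]]]]; try lia; reflexivity).
    rewrite Rmult_1_r. now apply gc_nonzero.
  - intros w Hw. rewrite gbil_e, Hw by exact Hk. ring.
Qed.

Lemma greflect_coordinate_planes S m v :
  stackel_nondegenerate S m ->
  greflect S m (e_ 1) v = flip_x v /\ greflect S m (e_ 2) v = flip_y v /\
  greflect S m (e_ 3) v = flip_z v.
Proof.
  intros (H0 & H1 & H2 & H3). destruct v as [x y z].
  unfold greflect, v3sub, v3scale, flip_x, flip_y, flip_z, gbil, e_; simpl.
  repeat split; f_equal; field; auto.
Qed.

Lemma on_cone_same_squares S lam mu m v w :
  on_cone S lam mu m v -> same_squares v w -> on_cone S lam mu m w.
Proof. rewrite !on_cone_diag_cone. apply diag_cone_same_squares. Qed.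

Lemma reflections_permute_cone S lam mu m v :
  stackel_nondegenerate S m -> four_directions S lam mu m -> on_cone S lam mu m v ->
  (forall k, (1 <= k <= 3)%nat ->
     on_cone S lam mu m (greflect S m (e_ k) v) /\ ~ same_line v (greflect S m (e_ k) v)) /\
  ~ same_line (greflect S m (e_ 1) v) (greflect S m (e_ 2) v) /\
  ~ same_line (greflect S m (e_ 1) v) (greflect S m (e_ 3) v) /\
  ~ same_line (greflect S m (e_ 2) v) (greflect S m (e_ 3) v).
Proof.
  intros Hn F Hv.
  destruct (greflect_coordinate_planes S m v Hn) as (R1 & R2 & R3).
  destruct (on_cone_coords_nonzero S lam mu m v F Hv) as (Hx & Hy & Hz).
  rewrite R1, R2, R3. split; [| repeat split; solve_sign_change].
  intros k Hk. destruct k as [|[|[|[|k]]]]; try lia; rewrite ?R1, ?R2, ?R3;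
    (split; [| solve_sign_change]);
    apply (on_cone_same_squares _ _ _ _ v);
    auto using same_squares_flip_x, same_squares_flip_y, same_squares_flip_z.
Qed.

Lemma frobenius_integrable_const U c : c <> v3zero -> frobenius_integrable U (fun _ => c).
Proof.
  intros Hc m _. split; [exact Hc |].
  unfold curl, partial; simpl. rewrite !Derive_const. ring.
Qed.

Lemma e_nonzero k : (1 <= k <= 3)%nat -> e_ k <> v3zero.
Proof. intros Hk E. destruct k as [|[|[|[|k]]]]; try lia; injection E; lra. Qed.

Lemma smooth_at_ex_derive f t : smooth_at f t -> ex_derive f t.
Proof. intro H. exact (H 1%nat). Qed.

Theorem proposition1 (S : StackelData) (U : V3 -> Prop) (lam mu : R) :
  open_in_R3 U ->
  (forall m, U m ->
     smooth_at (fE S) (vx m) /\ smooth_at (fK S) (vx m) /\ smooth_at (fP S) (vx m) /\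
     smooth_at (fF S) (vy m) /\ smooth_at (fL S) (vy m) /\ smooth_at (fQ S) (vy m) /\
     smooth_at (fG S) (vz m) /\ smooth_at (fM S) (vz m) /\ smooth_at (fR S) (vz m)) ->
  (forall m, U m -> stDelta S m <> 0 /\ D1 S m <> 0 /\ D2 S m <> 0 /\ D3 S m <> 0) ->
  (forall m, U m -> four_directions S lam mu m) ->
  (forall (a b : R) (gam : R -> V3),
     regular_curve U a b gam ->
     (forall t, a < t < b -> on_cone S lam mu (gam t) (vel gam t)) ->
     pregeodesic S a b gam) /\
  (forall m, U m ->
     (forall k, (1 <= k <= 3)%nat ->
        gbil S m (e_ k) (e_ k) <> 0 /\
        forall w, in_pi k w -> gbil S m (e_ k) w = 0) /\
     gbil S m (e_ 1) (e_ 2) = 0 /\ gbil S m (e_ 1) (e_ 3) = 0 /\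
     gbil S m (e_ 2) (e_ 3) = 0 /\
     forall v, on_cone S lam mu m v ->
       (forall k, (1 <= k <= 3)%nat ->
          on_cone S lam mu m (greflect S m (e_ k) v) /\
          ~ same_line v (greflect S m (e_ k) v)) /\
       ~ same_line (greflect S m (e_ 1) v) (greflect S m (e_ 2) v) /\
       ~ same_line (greflect S m (e_ 1) v) (greflect S m (e_ 3) v) /\
       ~ same_line (greflect S m (e_ 2) v) (greflect S m (e_ 3) v)) /\
  (forall k, (1 <= k <= 3)%nat -> frobenius_integrable U (fun _ => e_ k)).
Proof.
  intros _ Hsmooth HN HF.
  assert (HD : forall m, U m -> stackel_derivable S m).
  { intros m Um. pose proof (Hsmooth m Um) as Hs. unfold stackel_derivable.
    repeat split; apply smooth_at_ex_derive; tauto. }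
  split; [| split].
  - intros a b gam Hgam Hcone.
    exact (cone_curve_pregeodesic S U lam mu a b gam HN HD HF Hgam Hcone).
  - intros m Um.
    destruct (coordinate_normals_orthogonal S m (HN m Um)) as (Horth & H12 & H13 & H23).
    refine (conj Horth (conj H12 (conj H13 (conj H23 _)))).
    intros v Hv. exact (reflections_permute_cone S lam mu m v (HN m Um) (HF m Um) Hv).
  - intros k Hk. now apply frobenius_integrable_const, e_nonzero.
Qed.
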